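(* Let $m\ge1$ and $\beta\in\mathbb R$. For $0\le s\le m$ set $\varepsilon_j=-1$ for $1\le j\le s$ and $\varepsilon_j=+1$ for $s<j\le m$, and $$F_s(m)=\frac{2^{m^2-m}}{\pi^m\,s!\,(m-s)!}\int_{[0,\pi/2]^m}dp_1\cdots dp_m\prod_{1\le k<j\le m}\sin^2(\varepsilon_jp_j-\varepsilon_kp_k).$$ Then $$\sum_{s=0}^m e^{s\beta}F_s(m)=\det_m T(\beta),\qquad T_{kn}(\beta)=\delta_{kn}\frac{e^\beta+1}{2}+(1-\delta_{kn})(1-e^\beta)\frac{1-(-1)^{n-k}}{2i\pi(n-k)},\quad 1\le k,n\le m.$$
   Context: This is the homogeneous free-fermion ($\zeta=\pi/2$) case of the generating function $\mathcal Q_m(\beta)=\langle\psi_g|\exp(\beta\sum_{j=1}^m\frac12(1-\sigma^z_j))|\psi_g\rangle$ of the XX chain; the claim is the stated integral/determinant identity. *)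

From Stdlib Require Import Reals.
From Coquelicot Require Import Coquelicot.
From mathcomp Require Import all_boot all_order all_algebra.
From mathcomp Require Import Rstruct complex.
Set Implicit Arguments. Unset Strict Implicit. Unset Printing Implicit Defensive.
Import Order.TTheory GRing.Theory Num.Theory.

(* Iterated integral over the cube [0,pi/2]^m of f : (nat -> R) -> R,
   variables p_1..p_m are stored at indices 0..m-1.  *)
Fixpoint iint_cube (m : nat) (f : (nat -> R) -> R) : R :=
  match m with
  | O => f (fun _ => 0%R)
  | S m' => RInt (fun x => iint_cube m'
               (fun p => f (fun j => if Nat.eqb j m' then x else p j)))
             0%R (PI / 2)%R
  end.

(* epsilon_j (0-based index j, i.e. paper index j+1): -1 for j+1 <= s, +1 otherwise *)
Definition eps (s j : nat) : R := if (j < s)%N then (-1)%R else 1%R.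

Local Open Scope ring_scope.
Local Open Scope complex_scope.

Definition integrand (m s : nat) (p : nat -> R) : R :=
  \prod_(j < m) \prod_(k < j) (sin (eps s j * p j - eps s k * p k)) ^+ 2.

Definition F (s m : nat) : R :=
  (2 ^+ (m * m - m))%R / (PI ^+ m * (s`!)%:R * ((m - s)`!)%:R)
  * iint_cube m (integrand m s).

(* the matrix T(beta), 0-based indices k n (paper indices k+1, n+1) *)
Definition Tmat (m : nat) (beta : R) : 'M[R[i]]_m :=
  \matrix_(k < m, n < m)
    if k == n then ((exp beta + 1) / 2)%:C
    else ((1 - exp beta)%:C * (1 - (-1) ^ (n%:Z - k%:Z))
          / (2 * 'i * (PI%:C) * ((n%:Z - k%:Z)%:~R))).

From Stdlib Require Import Reals FunctionalExtensionality.
From Coquelicot Require Import Coquelicot.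
From mathcomp Require Import all_boot all_order all_algebra all_fingroup.
From mathcomp Require Import Rstruct complex ring lra zify.
Import Order.TTheory GRing.Theory Num.Theory.
Local Open Scope ring_scope.
Local Open Scope complex_scope.

(* Since sin^2(u - v) = (e^{2iu} - e^{2iv})(e^{-2iu} - e^{-2iv}) / 4, the
   integrand is 2^{m - m^2} times the product of two Vandermonde products in
   z_j = e^{2i eps_j p_j} and its conjugate.  Expanding both by the Leibniz
   formula gives a signed sum over pairs of permutations (a, b) of products of
   the one-variable functions e^{2i eps_j (a_j - b_j) p_j}, so the integral over
   the cube factors, and the one-dimensional integrals are the entries of two
   fixed matrices M_{+1}, M_{-1} (according to eps_j).  A signed pair sum only
   depends on how many factors use M_{-1}, hence summing over s with weight
   e^{s beta} m!/(s!(m-s)!) = e^{s beta} binom(m, s) collects all subsets of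
   coordinates and yields m! det(e^beta M_{-1} + M_{+1}) = m! pi^m det T(beta). *)

Notation cRe := (@complex.Re _).
Notation cIm := (@complex.Im _).

Lemma vandermonde_leibniz (K : comPzRingType) (m : nat) (z : nat -> K) :
  \prod_(j < m) \prod_(k < j) (z j - z k)
  = \sum_(s : 'S_m) (-1) ^+ s * \prod_(i < m) z i ^+ s i.
Proof.
pose a := \row_(j < m) z j.
have -> : \sum_(s : 'S_m) (-1) ^+ s * \prod_(i < m) z i ^+ s i = \det (Vandermonde m a).
  rewrite -det_tr /determinant; apply: eq_bigr => s _; congr (_ * _).
  by apply: eq_bigr => i _; rewrite !mxE.
rewrite det_Vandermonde.
transitivity (\prod_(j < m) \prod_(k < m | (k < j)%N) (z j - z k)).
  by apply: eq_bigr => j _; rewrite (big_ord_widen m (fun k => z j - z k)) // ltnW.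
rewrite (exchange_big_dep predT) //=.
by apply: eq_bigr => i _; apply: eq_bigr => j _; rewrite !mxE.
Qed.

Lemma prod_triangle_sqr (K : comPzRingType) (c : K) (m : nat) :
  \prod_(j < m) \prod_(k < j) c ^+ 2 = c ^+ (m * m - m).
Proof.
elim: m => [|m IHm]; first by rewrite big_ord0 expr0.
rewrite big_ord_recr /= IHm prodr_const card_ord -exprM -exprD.
by congr (_ ^+ _); nia.
Qed.

Lemma sign_exprzB (K : unitRingType) (a b : nat) :
  (-1 : K) ^ (b%:Z - a%:Z) = (-1) ^+ (a + b).
Proof. by rewrite exprzDr ?unitrN1 // -exprnN invr_sign addnC exprD. Qed.

Section PermutationPairs.
Variables (K : comPzRingType) (m : nat).

Lemma sign_permM (s t : 'S_m) : (-1) ^+ (s * t)%g = (-1) ^+ s * (-1) ^+ t :> K.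
Proof. by rewrite odd_permM signr_addb. Qed.

Lemma sign_perm_sqr (s : 'S_m) : (-1) ^+ s * (-1) ^+ s = 1 :> K.
Proof. by rewrite -expr2 sqrr_sign. Qed.

Lemma sum_perm_pairs_det (M : 'M[K]_m) :
  \sum_(s : 'S_m) \sum_(t : 'S_m) (-1) ^+ s * (-1) ^+ t * \prod_(j < m) M (s j) (t j)
  = m`!%:R * \det M.
Proof.
have inner (s : 'S_m) : \sum_(t : 'S_m) (-1) ^+ s * (-1) ^+ t * \prod_(j < m) M (s j) (t j) = \det M.
  rewrite (reindex_inj (mulgI s)); apply: eq_bigr => r _ /=.
  rewrite (reindex_inj (@perm_inj _ s^-1)) /= sign_permM mulrA sign_perm_sqr mul1r.
  congr (_ * _); apply: eq_bigr => i _.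
  by rewrite permKV permM permKV.
by rewrite (eq_bigr _ (fun s _ => inner s)) sumr_const card_Sn mulr_natl.
Qed.

Variable f : bool -> nat -> nat -> K.

(* [f true] and [f false] are two matrices; [chi j] selects which one the
   [j]-th factor of each Leibniz term is taken from. *)
Definition pair_sum (chi : 'I_m -> bool) : K :=
  \sum_(s : 'S_m) \sum_(t : 'S_m)
    (-1) ^+ s * (-1) ^+ t * \prod_(j < m) f (chi j) (s j) (t j).

Lemma eq_pair_sum (chi1 chi2 : 'I_m -> bool) : chi1 =1 chi2 -> pair_sum chi1 = pair_sum chi2.
Proof.
move=> chiE; apply: eq_bigr => s _; apply: eq_bigr => t _; congr (_ * _).
by apply: eq_bigr => j _; rewrite chiE.
Qed.

Lemma pair_sum_perm (chi : 'I_m -> bool) (p : 'S_m) :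
  pair_sum (fun j => chi (p j)) = pair_sum chi.
Proof.
rewrite /pair_sum (reindex_inj (mulgI p)); apply: eq_bigr => s _ /=.
rewrite (reindex_inj (mulgI p)); apply: eq_bigr => t _ /=.
rewrite !sign_permM mulrACA sign_perm_sqr mul1r; congr (_ * _).
rewrite (reindex_inj (@perm_inj _ p^-1)); apply: eq_bigr => i _ /=.
by rewrite !permM !permKV.
Qed.

Lemma perm_set_prefix (S : {set 'I_m}) :
  exists p : 'S_m, forall j, (p j \in S) = (j < #|S|)%N.
Proof.
pose e := enum S ++ enum (~: S).
have e_all x : x \in e by rewrite mem_cat !mem_enum in_setC; case: (x \in S).
have size_e : size e = m by rewrite size_cat -!cardE cardsC card_ord.
have index_lt x : (index x e < m)%N by have := index_mem x e; rewrite e_all size_e.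
pose g x := Ordinal (index_lt x).
have g_inj : injective g by move=> x y /(congr1 val) /=; apply: index_inj.
exists (perm g_inj)^-1%g => j.
have : index ((perm g_inj)^-1%g j) e = j.
  by have := permKV (perm g_inj) j; rewrite permE => /(congr1 val).
move: ((perm g_inj)^-1%g j) => x <-.
rewrite /e index_cat mem_enum; case: (boolP (x \in S)) => xS.
  by rewrite cardE index_mem mem_enum.
by rewrite cardE ltnNge leq_addr.
Qed.

Lemma pair_sum_set (S : {set 'I_m}) :
  pair_sum (fun j => j \in S) = pair_sum (fun j => (j < #|S|)%N).
Proof.
have [p pS] := perm_set_prefix S.
by rewrite -(pair_sum_perm _ p); apply: eq_pair_sum => j; rewrite pS.
Qed.

Lemma sum_set_card (g : nat -> K) :
  \sum_(S : {set 'I_m}) g #|S| = \sum_(s < m.+1) 'C(m, s)%:R * g s.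
Proof.
have card_le (S : {set 'I_m}) : (#|S| <= m)%N by rewrite -[X in (_ <= X)%N](card_ord m) max_card.
rewrite (partition_big (fun S : {set 'I_m} => (inord #|S| : 'I_m.+1)) predT) //=.
apply: eq_bigr => s _.
rewrite (eq_bigl (fun S : {set 'I_m} => #|S| == s)); last first.
  move=> S; apply/eqP/eqP => [<-|Ss]; first by rewrite inordK // ltnS.
  by apply: val_inj; rewrite /= inordK ?Ss // ltnS.
rewrite (eq_bigr (fun _ => g s)); last by move=> S /eqP ->.
rewrite sumr_const mulr_natl; congr (_ *+ _).
have := card_draws 'I_m s; rewrite card_ord => <-.
by apply: eq_card => S; rewrite inE.
Qed.

Lemma sum_binomial_pair_sum (x : K) :
  \sum_(s < m.+1) (x ^+ s * 'C(m, s)%:R) * pair_sum (fun j => (j < s)%N)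
  = m`!%:R * \det (\matrix_(k < m, n < m) (x * f true k n + f false k n)).
Proof.
rewrite -sum_perm_pairs_det.
have expand_prod (s t : 'S_m) :
    \prod_(j < m) (\matrix_(k < m, n < m) (x * f true k n + f false k n)) (s j) (t j)
  = \sum_(S : {set 'I_m}) x ^+ #|S| * \prod_(j < m) f (j \in S) (s j) (t j).
  under eq_bigr do rewrite mxE.
  rewrite bigA_distr /=; apply: eq_bigr => S _.
  transitivity (\prod_j ((if j \in S then x else 1) * f (j \in S) (s j) (t j))).
    by apply: eq_bigr => j _; case: (j \in S); rewrite ?mul1r.
  by rewrite big_split -big_mkcond prodr_const.
transitivity (\sum_(S : {set 'I_m}) x ^+ #|S| * pair_sum (fun j => (j < #|S|)%N)).
  rewrite (sum_set_card (fun k => x ^+ k * pair_sum (fun j => (j < k)%N))).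
  by apply: eq_bigr => s _; rewrite mulrCA mulrA.
under [RHS]eq_bigr do under eq_bigr do rewrite expand_prod mulr_sumr.
under [RHS]eq_bigr do rewrite exchange_big.
rewrite [RHS]exchange_big; apply: eq_bigr => S _.
rewrite -pair_sum_set /pair_sum mulr_sumr; apply: eq_bigr => s _.
by rewrite mulr_sumr; apply: eq_bigr => t _; rewrite mulrCA.
Qed.

End PermutationPairs.

Arguments pair_sum {K m} f chi.

Lemma is_RInt_big_sum (I : Type) (r : seq I) (f : I -> R -> R) (v : I -> R)
    (a b : R) :
  (forall t, is_RInt (f t) a b (v t)) ->
  is_RInt (fun x => \sum_(t <- r) f t x) a b (\sum_(t <- r) v t).
Proof.
move=> fv; elim: r => [|t r IHr].
  apply: (@is_RInt_ext R_NormedModule (fun _ => 0%R)) => [x _|].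
    by rewrite big_nil.
  by rewrite big_nil; have := @is_RInt_const R_NormedModule a b 0%R; rewrite scal_zero_r.
apply: (@is_RInt_ext R_NormedModule (fun x => f t x + \sum_(t <- r) f t x)).
  by move=> x _; rewrite big_cons.
by rewrite big_cons; exact: (@is_RInt_plus R_NormedModule _ _ _ _ _ _ (fv t) IHr).
Qed.

Definition cRInt (g : R -> R[i]) (a b : R) : R[i] :=
  RInt (fun x => cRe (g x)) a b +i* RInt (fun x => cIm (g x)) a b.

Definition continuous_complex (g : R -> R[i]) : Prop :=
  forall x, continuous (fun y => cRe (g y)) x /\ continuous (fun y => cIm (g y)) x.

Lemma ReM (x y : R[i]) : cRe (x * y) = cRe x * cRe y - cIm x * cIm y.
Proof. by case: x; case: y. Qed.

Lemma Re_sum (I : finType) (f : I -> R[i]) : cRe (\sum_t f t) = \sum_t cRe (f t).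
Proof. by apply: (big_morph (@complex.Re R)) => // -[? ?] [? ?]. Qed.

Lemma RInt_Re_lincomb (I : finType) (c : I -> R[i]) (g : I -> R -> R[i]) (a b : R) :
  (forall t, continuous_complex (g t)) ->
  RInt (fun x => cRe (\sum_t c t * g t x)) a b = cRe (\sum_t c t * cRInt (g t) a b).
Proof.
move=> gc; rewrite Re_sum; apply: is_RInt_unique.
apply: (@is_RInt_ext R_NormedModule (fun x => \sum_t cRe (c t * g t x))).
  by move=> x _; rewrite Re_sum.
apply: is_RInt_big_sum => t.
have [ReI ImI] : ex_RInt (fun x => cRe (g t x)) a b /\ ex_RInt (fun x => cIm (g t x)) a b.
  by split; apply: ex_RInt_continuous => x _; case: (gc t x).
have := @is_RInt_minus R_NormedModule _ _ _ _ _ _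
  (@is_RInt_scal R_NormedModule _ _ _ (cRe (c t)) _ (RInt_correct _ _ _ ReI))
  (@is_RInt_scal R_NormedModule _ _ _ (cIm (c t)) _ (RInt_correct _ _ _ ImI)).
by rewrite ReM; apply: (@is_RInt_ext R_NormedModule) => x _; rewrite ReM.
Qed.

Lemma iint_cube0 (m : nat) : iint_cube m (fun _ => 0) = 0.
Proof.
elim: m => [|m IHm] //=.
under RInt_ext => x _ do rewrite IHm.
by rewrite RInt_const scal_zero_r.
Qed.

Lemma iint_cube_Re_lincomb_prod (I : finType) (m : nat) (c : I -> R[i])
    (h : I -> nat -> R -> R[i]) :
  (forall t j, continuous_complex (h t j)) ->
  iint_cube m (fun p => cRe (\sum_t c t * \prod_(j < m) h t j (p j)))
  = cRe (\sum_t c t * \prod_(j < m) cRInt (h t j) 0 (PI / 2)).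
Proof.
move=> hc; elim: m c => [|m IHm] c /=.
  by congr cRe; apply: eq_bigr => t _; rewrite !big_ord0.
have last_var x : (fun p : nat -> R =>
    cRe (\sum_t c t * \prod_(j < m.+1) h t j (if Nat.eqb j m then x else p j)))
  = (fun p => cRe (\sum_t (c t * h t m x) * \prod_(j < m) h t j (p j))).
  apply: functional_extensionality => p; congr cRe; apply: eq_bigr => t _.
  rewrite big_ord_recr /= Nat.eqb_refl mulrAC -mulrA; congr (_ * (_ * _)).
  apply: eq_bigr => j _; suff -> : Nat.eqb j m = false by [].
  by apply/Nat.eqb_neq => jm; move: (ltn_ord j); rewrite jm ltnn.
under RInt_ext => x _ do rewrite last_var IHm.
under RInt_ext => x _ do under eq_bigr do rewrite mulrAC.
rewrite RInt_Re_lincomb //; congr cRe; apply: eq_bigr => t _.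
by rewrite big_ord_recr /= mulrA.
Qed.

Lemma iint_cube_lincomb_prod (I : finType) (m : nat) (f : (nat -> R) -> R)
    (c : I -> R[i]) (h : I -> nat -> R -> R[i]) :
  (forall t j, continuous_complex (h t j)) ->
  (forall p, (f p)%:C = \sum_t c t * \prod_(j < m) h t j (p j)) ->
  (iint_cube m f)%:C = \sum_t c t * \prod_(j < m) cRInt (h t j) 0 (PI / 2).
Proof.
move=> hc fE; set G := \sum_t _.
have ReG : iint_cube m f = cRe G.
  rewrite -iint_cube_Re_lincomb_prod //; congr iint_cube.
  by apply: functional_extensionality => p; rewrite -fE.
(* the imaginary part vanishes because [f] is real, so [f * 'i] has zero real part *)
have ImG : cIm G = 0.
  apply: oppr_inj; rewrite oppr0 -ReiNIm /G mulr_suml.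
  under eq_bigr do rewrite mulrAC.
  rewrite -iint_cube_Re_lincomb_prod // -[RHS](iint_cube0 m); congr iint_cube.
  apply: functional_extensionality => p.
  under eq_bigr do rewrite mulrAC.
  by rewrite -mulr_suml -fE /= mulr0 mul0r subr0.
by rewrite ReG [RHS]complexE ImG mulr0 addr0.
Qed.

(* Stated with [%:C] on both sides so that rewriting with them keeps the
   notation, which the generic [rmorph*] lemmas replace by a structure
   projection that later rewrites can no longer match. *)
Lemma real_complexM (a b : R) : (a * b)%:C = a%:C * b%:C.
Proof. exact: rmorphM. Qed.

Lemma real_complexV (a : R) : (a^-1)%:C = a%:C^-1.
Proof. exact: fmorphV. Qed.

Lemma real_complexX (a : R) (n : nat) : (a ^+ n)%:C = a%:C ^+ n.
Proof. exact: rmorphXn. Qed.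

Lemma real_complex_nat (n : nat) : (n%:R : R)%:C = n%:R.
Proof. exact: rmorph_nat. Qed.

Lemma real_complex1 : (1 : R)%:C = 1.
Proof. by []. Qed.

Lemma real_complexD (a b : R) : (a + b)%:C = a%:C + b%:C.
Proof. exact: rmorphD. Qed.

Lemma real_complexB (a b : R) : (a - b)%:C = a%:C - b%:C.
Proof. exact: rmorphB. Qed.

Lemma real_complexN (a : R) : (- a)%:C = - a%:C.
Proof. exact: rmorphN. Qed.

Lemma real_complex_prod (I : finType) (f : I -> R) :
  (\prod_i f i)%:C = \prod_i (f i)%:C.
Proof. exact: rmorph_prod. Qed.

Lemma PI_C_neq0 : PI%:C != 0 :> R[i].
Proof. by apply/eqP => /(congr1 (@complex.Re R)); exact: PI_neq0. Qed.

Lemma imaginaryE (r : R) : 0 +i* r = 'i * r%:C.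
Proof. by apply/eqP; rewrite eq_complex /=; apply/andP; split; apply/eqP; ring. Qed.

Lemma inv_i : ('i : R[i])^-1 = - 'i.
Proof.
have i0 : ('i : R[i]) != 0 by apply/eqP => /(congr1 (@complex.Im R)) /eqP; rewrite oner_eq0.
by apply: (mulfI i0); rewrite divff // mulrN -expr2 sqr_i opprK.
Qed.

Definition expi (y : R) : R[i] := cos y +i* sin y.
Arguments expi y%_ring_scope.

Lemma expiD (a b : R) : expi a * expi b = expi (a + b).
Proof.
apply/eqP; rewrite eq_complex /= cos_plus sin_plus.
by rewrite ?(RminusE, RmultE, RplusE); apply/andP; split; apply/eqP; ring.
Qed.

Lemma expiMn (a : R) (n : nat) : expi a ^+ n = expi (n%:R * a).
Proof.
elim: n => [|n IHn]; first by rewrite expr0 mul0r /expi cos_0 sin_0.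
by rewrite exprS IHn expiD -natr1 mulrDl mul1r addrC.
Qed.

Lemma continuous_expiM (k : R) : continuous_complex (fun x => expi (k * x)).
Proof.
move=> x; split; apply: ex_derive_continuous.
  by change (ex_derive (fun y => cos (Rmult k y)) x); auto_derive.
by change (ex_derive (fun y => sin (Rmult k y)) x); auto_derive.
Qed.

Lemma sin2_expi (u v : R) :
  (sin (u - v) ^+ 2)%:C
  = (expi (u + u) - expi (v + v)) * (expi (- (u + u)) - expi (- (v + v))) / 4.
Proof.
have cs2 x : cos x ^+ 2 + sin x ^+ 2 = 1.
  have := sin2_cos2 x; rewrite /Rsqr RplusE !RmultE => cs.
  by rewrite -[RHS]cs; ring.
have cos_diff : cos ((u + u) - (v + v))%R = 1 - 2 * sin (u - v) ^+ 2.
  rewrite (_ : ((u + u) - (v + v))%R = Rplus (u - v) (u - v)); last first.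
    by rewrite RplusE RminusE; ring.
  by move: (cs2 (u - v)); rewrite cos_plus ?(RminusE, RmultE) => cs; nra.
have four : 4 != 0 :> R[i] by rewrite pnatr_eq0.
apply: (mulIf four); rewrite divfK // -real_complex_nat -real_complexM.
apply/eqP; rewrite eq_complex /= !cos_neg !sin_neg; apply/andP; split; apply/eqP.
  move: cos_diff (cs2 (u + u)%R) (cs2 (v + v)%R); rewrite cos_minus.
  by rewrite ?(RminusE, RmultE, RplusE, RoppE) => cd cu cv; nra.
by rewrite ?(RminusE, RmultE, RplusE, RoppE); ring.
Qed.

Section ScaledTrigIntegrals.
Local Open Scope R_scope.

Lemma is_RInt_cos_scaled (k b : R) : k <> 0 ->
  is_RInt (fun x => cos (k * x)) 0 b (sin (k * b) / k).
Proof.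
move=> k0; have := @is_RInt_derive R_CompleteNormedModule
  (fun x => sin (k * x) / k) (fun x => cos (k * x)) 0 b.
have -> : minus (sin (k * b) / k) (sin (k * 0) / k) = sin (k * b) / k.
  by rewrite /minus /plus /Hierarchy.opp /= Rmult_0_r sin_0 /Rdiv Rmult_0_l Ropp_0 Rplus_0_r.
apply=> x _; last by apply: ex_derive_continuous; auto_derive.
by auto_derive; [|rewrite ?RealsE; field; exact/eqP].
Qed.

Lemma is_RInt_sin_scaled (k b : R) : k <> 0 ->
  is_RInt (fun x => sin (k * x)) 0 b ((1 - cos (k * b)) / k).
Proof.
move=> k0; have := @is_RInt_derive R_CompleteNormedModule
  (fun x => - cos (k * x) / k) (fun x => sin (k * x)) 0 b.
have -> : minus (- cos (k * b) / k) (- cos (k * 0) / k) = (1 - cos (k * b)) / k.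
  by rewrite /minus /plus /Hierarchy.opp /= Rmult_0_r cos_0 ?RealsE; field; exact/eqP.
apply=> x _; last by apply: ex_derive_continuous; auto_derive.
by auto_derive; [|rewrite ?RealsE; field; exact/eqP].
Qed.

End ScaledTrigIntegrals.

Lemma cRInt_expiM (k b : R) : k <> 0 ->
  cRInt (fun x => expi (k * x)) 0 b = (sin (k * b) / k) +i* ((1 - cos (k * b)) / k).
Proof.
move=> k0; rewrite /cRInt /=; congr (_ +i* _); apply: is_RInt_unique.
  exact: is_RInt_cos_scaled.
exact: is_RInt_sin_scaled.
Qed.

Lemma sin_natPI (n : nat) : sin (n%:R * PI) = 0.
Proof.
rewrite RmultE; elim: n => [|n IHn]; first by rewrite mul0r sin_0.
by rewrite -natr1 mulrDl mul1r neg_sin IHn Ropp_0.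
Qed.

Lemma cos_natPI (n : nat) : cos (n%:R * PI) = (-1) ^+ n.
Proof.
rewrite RmultE; elim: n => [|n IHn]; first by rewrite mul0r cos_0.
by rewrite -natr1 mulrDl mul1r neg_cos IHn exprS mulN1r.
Qed.

Definition freq_integral (e : R) (a b : nat) : R[i] :=
  if a == b then (PI / 2)%:C
  else 0 +i* ((1 - (-1) ^+ (a + b)) / (2 * e * (a%:R - b%:R))).

Lemma cRInt_expi_freq (e : R) (a b : nat) : e = 1 \/ e = -1 ->
  cRInt (fun x => expi (2 * e * (a%:R - b%:R) * x)) 0 (PI / 2) = freq_integral e a b.
Proof.
move=> e1; rewrite /freq_integral; case: eqP => [<-|/eqP ab].
  have -> : (fun x => expi (2 * e * (a%:R - a%:R) * x)) = fun _ => 1.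
    by apply: functional_extensionality => x; rewrite subrr mulr0 mul0r /expi cos_0 sin_0.
  by rewrite /cRInt /= !RInt_const /scal /= /mult /= !RealsE subr0 mulr1 mulr0.
have k0 : 2 * e * (a%:R - b%:R) != 0.
  rewrite !mulf_neq0 ?pnatr_eq0 ?subr_eq0 ?eqr_nat //.
  by case: e1 => ->; rewrite ?oppr_eq0 oner_eq0.
have two0 : 2 != 0 :> R by rewrite pnatr_eq0.
rewrite cRInt_expiM; last exact/eqP.
have [-> ->] : sin (2 * e * (a%:R - b%:R) * (PI / 2))%R = 0
            /\ cos (2 * e * (a%:R - b%:R) * (PI / 2))%R = (-1) ^+ (a + b).
  have -> : 2 * e * (a%:R - b%:R) * (PI / 2) = e * (a%:R * PI - b%:R * PI) by field.
  have [sin0 cos1] : sin (a%:R * PI - b%:R * PI)%R = 0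
                  /\ cos (a%:R * PI - b%:R * PI)%R = (-1) ^+ (a + b).
    rewrite sin_minus cos_minus !sin_natPI !cos_natPI exprD.
    by rewrite ?(RminusE, RmultE, RplusE); split; ring.
  case: e1 => ->; rewrite ?mul1r ?mulN1r ?sin_neg ?cos_neg; first by [].
  by rewrite sin0 cos1 Ropp_0.
by congr (_ +i* _); exact: mul0r.
Qed.

Definition sided_integral (neg : bool) : nat -> nat -> R[i] :=
  freq_integral (if neg then -1 else 1).

(* [perm_nat s] extends the permutation [s] of ['I_m] to [nat], with junk value [0]. *)
Definition perm_nat {m : nat} (s : 'S_m) (j : nat) : nat :=
  oapp (fun j' : 'I_m => val (s j')) 0%N (insub j).

Lemma perm_natE (m : nat) (s : 'S_m) (j : 'I_m) : perm_nat s j = s j.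
Proof. by rewrite /perm_nat valK. Qed.

Definition wave {m : nat} (s : nat) (t : 'S_m * 'S_m) (j : nat) (x : R) : R[i] :=
  expi (2 * eps s j * ((perm_nat t.1 j)%:R - (perm_nat t.2 j)%:R) * x).

Lemma integrand_expansion (m s : nat) (p : nat -> R) :
  (integrand m s p)%:C
  = \sum_(t : 'S_m * 'S_m)
      (2^-1 ^+ (m * m - m) * ((-1) ^+ t.1 * (-1) ^+ t.2)) * \prod_(j < m) wave s t j (p j).
Proof.
pose z j := expi (eps s j * p j + eps s j * p j).
pose w j := expi (- (eps s j * p j + eps s j * p j)).
have sinE j k : (sin (eps s j * p j - eps s k * p k) ^+ 2)%:C
              = (z j - z k) * (w j - w k) * 2^-1 ^+ 2.
  by rewrite sin2_expi exprVn -natrX.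
rewrite /integrand real_complex_prod.
under eq_bigr do rewrite real_complex_prod.
under eq_bigr do under eq_bigr do rewrite sinE.
under eq_bigr do rewrite 2!big_split.
rewrite 2!big_split /= !vandermonde_leibniz prod_triangle_sqr mulrC mulr_suml.
under eq_bigr do rewrite mulr_sumr.
rewrite pair_big mulr_sumr; apply: eq_bigr => -[a b] _ /=.
have -> : \prod_(j < m) wave s (a, b) j (p j)
        = (\prod_(j < m) z j ^+ a j) * \prod_(j < m) w j ^+ b j.
  rewrite -big_split; apply: eq_bigr => j _ /=.
  rewrite /wave /z /w !perm_natE !expiMn expiD; congr expi.
  by rewrite ?(RminusE, RmultE, RplusE, RoppE); ring.
by rewrite /= -mulrA; congr (_ * _); rewrite mulrACA.
Qed.

Lemma iint_integrand (m s : nat) :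
  (iint_cube m (integrand m s))%:C
  = 2^-1 ^+ (m * m - m) * pair_sum sided_integral (fun j : 'I_m => (j < s)%N).
Proof.
have wave_cont (t : 'S_m * 'S_m) j : continuous_complex (wave s t j).
  exact: continuous_expiM.
rewrite (iint_cube_lincomb_prod _ _ _ _ _ wave_cont (integrand_expansion m s)).
rewrite /pair_sum pair_big mulr_sumr.
apply: eq_bigr => t _; rewrite [RHS]mulrA; congr (_ * _).
apply: eq_bigr => j _; rewrite /wave !perm_natE; apply: cRInt_expi_freq.
by rewrite /eps; case: ifP; [right | left].
Qed.

Lemma F_pair_sum (s m : nat) : (s <= m)%N ->
  (F s m)%:C = 'C(m, s)%:R * pair_sum sided_integral (fun j : 'I_m => (j < s)%N)
               / (PI%:C ^+ m * m`!%:R).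
Proof.
move=> sm; have fact0 k : (k`!%:R : R[i]) != 0 by rewrite pnatr_eq0 -lt0n fact_gt0.
have two0 : (2 : R[i]) != 0 by rewrite pnatr_eq0.
(* [PI] is kept opaque: rewriting [real_complexM] would otherwise unfold it *)
move: PI_C_neq0; rewrite /F; set P := PI; clearbody P => P0.
rewrite !(real_complexM, real_complexV, real_complexX, real_complex_nat) iint_integrand.
rewrite -(bin_fact sm) !natrM exprVn.
have bin0 : ('C(m, s)%:R : R[i]) != 0 by rewrite pnatr_eq0 -lt0n bin_gt0.
by field; rewrite !fact0 bin0 !expf_neq0.
Qed.

Lemma Tmat_entry (m : nat) (beta : R) (k n : 'I_m) :
  (exp beta)%:C * sided_integral true k n + sided_integral false k n
  = PI%:C * Tmat m beta k n.
Proof.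
rewrite mxE /sided_integral /freq_integral.
move: PI_C_neq0; set P := PI; clearbody P => P0.
case: (eqVneq k n) => [<-|kn].
  rewrite !eqxx !(real_complex_nat, real_complexM, real_complexV, real_complexD, real_complex1).
  by field.
have kn' : (k : nat) != n by [].
rewrite ?(negbTE kn) (negbTE kn') sign_exprzB intrB -!pmulrn !imaginaryE.
rewrite !(real_complex_nat, real_complexM, real_complexV, real_complexB, real_complexN,
          real_complexX, real_complex1) !invfM inv_i.
have kn0 : (k%:R - n%:R : R[i]) != 0 by rewrite subr_eq0 eqr_nat.
rewrite -[n%:R - k%:R]opprB invrN.
move: kn0; set d := k%:R - n%:R; clearbody d => d0.
by field; rewrite d0 P0.
Qed.

Theorem mainTheorem7 (m : nat) (beta : R) (hm : (1 <= m)%N) :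
  \sum_(s < m.+1) ((exp (INR s * beta)) * F s m)%:C = \det (Tmat m beta).
Proof.
have term (s : 'I_m.+1) : (exp (INR s * beta) * F s m)%:C
    = (exp beta)%:C ^+ s * 'C(m, s)%:R
      * pair_sum sided_integral (fun j : 'I_m => (j < s)%N) / (PI%:C ^+ m * m`!%:R).
  have exp_s : exp (INR s * beta) = exp beta ^+ s.
    by rewrite expRX RmultE INRE mulr_natl.
  rewrite real_complexM F_pair_sum; last by rewrite -ltnS.
  by rewrite exp_s real_complexX !mulrA.
rewrite (eq_bigr _ (fun s _ => term s)) -mulr_suml sum_binomial_pair_sum.
have -> : \matrix_(k, n) ((exp beta)%:C * sided_integral true k n + sided_integral false k n)
        = PI%:C *: Tmat m beta.
  by apply/matrixP => k n; rewrite mxE [RHS]mxE Tmat_entry.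
have fact0 : (m`!%:R : R[i]) != 0 by rewrite pnatr_eq0 -lt0n fact_gt0.
by rewrite detZ; field; rewrite fact0 expf_neq0 ?PI_C_neq0.
Qed.
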